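(* Let $T\in\mathcal{B}(\mathcal{H})$ and let $T=A+iB$ be the Cartesian decomposition of $T$. Then for every $\theta\in\mathbb{R}$, \begin{equation*} \frac{1}{2}w(T)\leq w\left(\begin{bmatrix} 0 &A \\ e^{i\theta}B& 0 \end{bmatrix}\right)\leq w(T). \end{equation*}
   Context: $\mathcal{H}$ is a complex Hilbert space and $\mathcal{B}(\mathcal{H})$ is the $C^*$-algebra of all bounded linear operators on $\mathcal{H}$. For $T\in\mathcal{B}(\mathcal{H})$, $w(T)=\sup\{|\langle Tx,x\rangle|:\|x\|=1\}$ is the numerical radius. The Cartesian decomposition $T=A+iB$ has $A=\frac{T+T^*}{2}$ and $B=\frac{T-T^*}{2i}$ self-adjoint. A $2\times 2$ operator matrix with entries in $\mathcal{B}(\mathcal{H})$ is regarded as an operator on $\mathcal{H}\oplus\mathcal{H}$. *)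

From HB Require Import structures.
From mathcomp Require Import all_boot all_order all_algebra.
From mathcomp Require Import all_classical all_reals.
From mathcomp Require Import complex.
From mathcomp Require Import trigo.
Set Implicit Arguments. Unset Strict Implicit. Unset Printing Implicit Defensive.
Import Order.TTheory GRing.Theory Num.Theory.
Local Open Scope ring_scope.
Local Open Scope complex_scope.

Section Hilbert.
Variable R : realType.
Local Notation C := (R[i]).

Definition ipnorm (U : Type) (ip : U -> U -> C) (x : U) : R :=
  Num.sqrt (complex.Re (ip x x)).

Definition is_hilbert (V : lmodType C) (ip : V -> V -> C) : Prop :=
  [/\ (forall (a : C) (x y z : V), ip (a *: x + y) z = a * ip x z + ip y z),
      (forall x y : V, ip y x = (ip x y)^*),
      (forall x : V, 0 <= ip x x),
      (forall x : V, ip x x = 0 -> x = 0) &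
      (forall u : nat -> V,
         (forall e : R, 0 < e -> exists N : nat, forall m n : nat,
             (N <= m)%N -> (N <= n)%N -> ipnorm ip (u m - u n) < e) ->
         exists l : V, forall e : R, 0 < e -> exists N : nat, forall n : nat,
             (N <= n)%N -> ipnorm ip (u n - l) < e)].

Definition is_bounded_op (V : lmodType C) (ip : V -> V -> C) (T : V -> V) : Prop :=
  (forall (a : C) (x y : V), T (a *: x + y) = a *: T x + T y) /\
  (exists M : R, forall x : V, ipnorm ip (T x) <= M * ipnorm ip x).

Definition is_adjoint (V : lmodType C) (ip : V -> V -> C) (T Ts : V -> V) : Prop :=
  forall x y : V, ip (T x) y = ip x (Ts y).

Definition numrad (U : Type) (ip : U -> U -> C) (f : U -> U) : R :=
  sup [set ComplexField.Normc.normc (ip (f x) x) | x in [set x | ipnorm ip x = 1]].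

Definition re_part (V : lmodType C) (T Ts : V -> V) : V -> V :=
  fun x => (2%:R)^-1 *: (T x + Ts x).
Definition im_part (V : lmodType C) (T Ts : V -> V) : V -> V :=
  fun x => (2%:R * 'i)^-1 *: (T x - Ts x).

Definition ip_sum (V : lmodType C) (ip : V -> V -> C) : (V * V)%type -> (V * V)%type -> C :=
  fun x y => ip x.1 y.1 + ip x.2 y.2.

(* the 2x2 operator matrix [[P, Q], [S, U]] acting on H (+) H *)
Definition opmx2 (V : lmodType C) (P Q S U : V -> V) : (V * V)%type -> (V * V)%type :=
  fun x => (P x.1 + Q x.2, S x.1 + U x.2).

Definition expi (theta : R) : C := cos theta +i* sin theta.

End Hilbert.

From mathcomp Require Import all_boot all_order all_algebra.
From mathcomp Require Import all_classical all_reals.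
From mathcomp Require Import complex trigo.
From mathcomp Require Import ring lra.
Set Implicit Arguments. Unset Strict Implicit. Unset Printing Implicit Defensive.
Import Order.TTheory GRing.Theory Num.Theory.
Import ComplexField.Normc.
Local Open Scope ring_scope.
Local Open Scope complex_scope.
(* Num.Theory exports a [Re] of its own that would shadow the projections. *)
Local Notation Re := (@complex.Re _).
Local Notation Im := (@complex.Im _).

(* The real and imaginary parts A, B of T give hermitian forms
   <A y, x>, <B y, x> whose diagonals are Re <T z, z> and Im <T z, z>, both
   bounded by w(T) ||z||^2; by polarization the whole forms are then bounded
   by w(T) (||x||^2 + ||y||^2) / 2, and summing the two off-diagonal terms of
   <M y, y> gives w(M) <= w(T).  Conversely, for a unit vector x, the vector
   y = (x, c x) / sqrt 2 with c^2 = i e^{i theta} makes <M y, y> equal to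
   c <T x, x>^* / 2, whence w(T) <= 2 w(M). *)

Section Complex.
Variable R : rcfType.
Implicit Types z : R[i].

Lemma normc_Re z : `|Re z| <= normc z.
Proof. by case: z => a b /=; rewrite -sqrtr_sqr ler_wsqrtr // lerDl sqr_ge0. Qed.

Lemma normc_Im z : `|Im z| <= normc z.
Proof. by case: z => a b /=; rewrite -sqrtr_sqr ler_wsqrtr // lerDr sqr_ge0. Qed.

Lemma normc_ge0 z : 0 <= normc z.
Proof. by case: z => a b; rewrite sqrtr_ge0. Qed.

Lemma normcR (r : R) : normc r%:C = `|r|.
Proof. by rewrite /= expr0n addr0 sqrtr_sqr. Qed.

Lemma normc_conj z : normc z^*%C = normc z.
Proof. by case: z => a b /=; rewrite sqrrN. Qed.

Lemma mulcJ_normc z : z * z^*%C = (normc z ^+ 2)%:C.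
Proof. by rewrite -sqr_normc -rmorphXn. Qed.

Lemma normc_sqrtc_unit z : normc z = 1 -> normc (sqrtc z) = 1.
Proof.
move=> z1; apply/eqP; rewrite -sqrp_eq1 ?normc_ge0 //.
by rewrite expr2 -normcM -expr2 sqr_sqrtc z1.
Qed.

Lemma conjcM z w : (z * w)^*%C = z^*%C * w^*%C.
Proof. exact: rmorphM. Qed.

Lemma conjcE z : z^*%C = (Re z)%:C - 'i * (Im z)%:C.
Proof.
case: z => a b; apply/eqP; rewrite eq_complex /=.
by rewrite !(mul0r, mul1r, oppr0, subr0, add0r, sub0r) !eqxx.
Qed.

Lemma normc_rotation z : exists2 u : R[i], u * u^*%C = 1 & u * z = (normc z)%:C.
Proof.
have [->|z0] := eqVneq z 0.
  by exists 1; rewrite ?rmorph1 mul1r ?normc0.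
have nz0 : normc z != 0 by apply: contra z0 => /eqP/eq0_normc ->.
exists ((normc z)%:C / z); last by rewrite mulfVK.
by rewrite mulcJ_normc normcM normcV normcR ger0_norm ?normc_ge0 // mulfV ?expr1n.
Qed.

End Complex.

Section Forms.
Variables (R : rcfType) (V : lmodType R[i]).
Implicit Types (h : V -> V -> R[i]) (a : R[i]) (x y z : V).

Definition linear_left h := forall a x y z, h (a *: x + y) z = a * h x z + h y z.
Definition conj_linear_right h :=
  forall a x y z, h z (a *: x + y) = a^*%C * h z x + h z y.
Definition hermitian_form h := forall x y, h y x = (h x y)^*%C.

(* When h y x = <T y, x>, these are the forms of the real and imaginary parts
   of T in its Cartesian decomposition. *)
Definition form_re h y x := 2^-1 * (h y x + (h x y)^*%C).
Definition form_im h y x := (2 * 'i)^-1 * (h y x - (h x y)^*%C).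

Section LinearLeft.
Variables (h : V -> V -> R[i]) (hL : linear_left h).

Lemma formDl x y z : h (x + y) z = h x z + h y z.
Proof. by rewrite -[x]scale1r hL mul1r scale1r. Qed.

Lemma form0l z : h 0 z = 0.
Proof. by apply: (addrI (h 0 z)); rewrite -formDl !addr0. Qed.

Lemma formZl a x z : h (a *: x) z = a * h x z.
Proof. by rewrite -[a *: x]addr0 hL form0l addr0. Qed.

Lemma formBl x y z : h (x - y) z = h x z - h y z.
Proof. by rewrite formDl -scaleN1r formZl mulN1r. Qed.

Hypothesis hC : hermitian_form h.

Lemma hermitian_conj_linear_right : conj_linear_right h.
Proof. by move=> a x y z; rewrite hC hL rmorphD rmorphM /= -!hC. Qed.

Lemma formDr x y z : h z (x + y) = h z x + h z y.
Proof. by rewrite hC formDl rmorphD /= -!hC. Qed.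

Lemma formZr a x z : h z (a *: x) = a^*%C * h z x.
Proof. by rewrite hC formZl rmorphM /= -!hC. Qed.

Lemma formZ_real (r : R) x y : h (r%:C *: x) (r%:C *: y) = (r ^+ 2)%:C * h x y.
Proof. by rewrite formZl formZr conjc_real mulrA -rmorphM expr2. Qed.

Lemma formBr x y z : h z (x - y) = h z x - h z y.
Proof. by rewrite hC formBl rmorphB /= -!hC. Qed.

Lemma form_polarization x y :
  Re (h (x + y) (x + y)) - Re (h (x - y) (x - y)) = 4 * Re (h x y).
Proof.
rewrite formDl formBl !(formBr, formDr) [h y x]hC.
by move: (h x x) (h x y) (h y y) => [a b] [c d] [e f] /=; lra.
Qed.

Lemma form_parallelogram x y :
  Re (h (x + y) (x + y)) + Re (h (x - y) (x - y)) = 2 * (Re (h x x) + Re (h y y)).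
Proof.
rewrite formDl formBl !(formBr, formDr) [h y x]hC.
by move: (h x x) (h x y) (h y y) => [a b] [c d] [e f] /=; lra.
Qed.

Lemma form_unimodular u x : u * u^*%C = 1 -> h (u *: x) (u *: x) = h x x.
Proof. by move=> uJ; rewrite formZl formZr mulrA uJ mul1r. Qed.

End LinearLeft.

Section HermitianParts.
Variables (h : V -> V -> R[i]) (hL : linear_left h) (hR : conj_linear_right h).

Lemma form_re_linear_left : linear_left (form_re h).
Proof. by move=> a x y z; rewrite /form_re hL hR rmorphD rmorphM /= conjcK; ring. Qed.

Lemma form_im_linear_left : linear_left (form_im h).
Proof. by move=> a x y z; rewrite /form_im hL hR rmorphD rmorphM /= conjcK; ring. Qed.

End HermitianParts.

Lemma form_re_hermitian h : hermitian_form (form_re h).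
Proof.
by move=> x y; rewrite /form_re rmorphM rmorphD fmorphV rmorph_nat /= conjcK; ring.
Qed.

Lemma form_im_hermitian h : hermitian_form (form_im h).
Proof.
move=> x y; rewrite /form_im !rmorphM rmorphB fmorphV rmorphM rmorph_nat /= conjcK.
have -> : Complex 0 (-1) = - 'i :> R[i] by apply/eqP; rewrite eq_complex /= oppr0 !eqxx.
by rewrite mulrN invrN; ring.
Qed.

Lemma form_re_diag h z : form_re h z z = (Re (h z z))%:C.
Proof. by rewrite /form_re addcJ mulKf ?pnatr_eq0. Qed.

Lemma form_im_diag h z : form_im h z z = (Im (h z z))%:C.
Proof.
rewrite /form_im subcJ [2 * _ * _]mulrAC mulKf // mulf_neq0 ?pnatr_eq0 //.
by rewrite eq_complex /= oner_eq0 andbF.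
Qed.

Section FormBound.
Variables (ip : V -> V -> R[i]) (ipL : linear_left ip) (ipC : hermitian_form ip).
Local Notation nsq x := (Re (ip x x)).

(* The one-sided bound on Re h y x comes from polarization; rotating x by a
   unimodular scalar turns it into a bound on the modulus. *)
Lemma hermitian_form_bound h (W : R) :
  linear_left h -> hermitian_form h -> (forall z, normc (h z z) <= W * nsq z) ->
  forall x y, normc (h y x) <= W * (nsq x + nsq y) / 2.
Proof.
move=> hL hC hW.
have Re_bound x y : Re (h y x) <= W * (nsq x + nsq y) / 2.
  have := form_polarization hL hC y x.
  have : W * nsq (y + x) + W * nsq (y - x) = 2 * W * (nsq y + nsq x).
    by rewrite -mulrDr (form_parallelogram ipL ipC); ring.
  have /ler_normlP[_ +] := le_trans (normc_Re _) (hW (y + x)).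
  have /ler_normlP[+ _] := le_trans (normc_Re _) (hW (y - x)).
  lra.
move=> x y; have [u uJ uh] := normc_rotation (h y x).
have := Re_bound (u^*%C *: x) y.
have uJ' : u^*%C * u^*%C^*%C = 1 by rewrite conjcK mulrC.
by rewrite (formZr hL hC) conjcK uh (form_unimodular ipL ipC _ uJ').
Qed.

End FormBound.

End Forms.

Section NumericalRadius.
Variables (R : realType) (U : Type) (ip : U -> U -> R[i]) (f : U -> U).
Local Open Scope classical_set_scope.

Lemma ipnorm_eq1 x : ipnorm ip x = 1 <-> Re (ip x x) = 1.
Proof.
rewrite /ipnorm; split=> [|->]; last exact: sqrtr1.
have [x0|x0] := leP 0 (Re (ip x x)).
  by move=> x1; rewrite -(sqr_sqrtr x0) x1 expr1n.
by rewrite ltr0_sqrtr // => /eqP; rewrite eq_sym oner_eq0.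
Qed.

Lemma numrad_ge0 : 0 <= numrad ip f.
Proof.
rewrite /numrad; set E := [set _ | _ in _].
have [[[r Er] ubE]|noE] := pselect (has_sup E); last by rewrite sup_out.
by apply: le_trans (ub_le_sup ubE Er); case: Er => x _ <-; exact: normc_ge0.
Qed.

Lemma numrad_le (W : R) : 0 <= W ->
  (forall x, Re (ip x x) = 1 -> normc (ip (f x) x) <= W) -> numrad ip f <= W.
Proof.
move=> W0 fW; rewrite /numrad; set E := [set _ | _ in _].
have [[r Er]|E0] := pselect (E !=set0).
  by apply: ge_sup; [exists r | move=> _ [x /ipnorm_eq1 x1 <-]; exact: fW].
suff -> : E = set0 by rewrite sup0.
by apply/seteqP; split=> // r Er; apply: E0; exists r.
Qed.

Lemma le_numrad (W : R) x :
  (forall x, Re (ip x x) = 1 -> normc (ip (f x) x) <= W) ->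
  Re (ip x x) = 1 -> normc (ip (f x) x) <= numrad ip f.
Proof.
move=> fW x1; apply: ub_le_sup; last by exists x => //; exact/ipnorm_eq1.
by exists W => _ [y /ipnorm_eq1 y1 <-]; exact: fW.
Qed.

End NumericalRadius.

Lemma normc_expi (R : realType) (t : R) : normc (expi t) = 1.
Proof. by rewrite /= cos2Dsin2 sqrtr1. Qed.

Lemma ip_sum_offdiag (R : realType) (V : lmodType R[i]) (ip : V -> V -> R[i])
    (P S : V -> V) (y : V * V) :
  ip_sum ip (opmx2 (fun _ => 0) P S (fun _ => 0) y) y = ip (P y.2) y.1 + ip (S y.1) y.2.
Proof. by rewrite /ip_sum /opmx2 /= add0r addr0. Qed.

Section CartesianDecomposition.
Variables (R : realType) (V : lmodType R[i]) (ip : V -> V -> R[i]) (T Ts : V -> V).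
Hypotheses (ipL : linear_left ip) (ipC : hermitian_form ip).
Hypotheses (ip_ge0 : forall x, 0 <= ip x x) (ip_def : forall x, ip x x = 0 -> x = 0).
Hypotheses (TL : forall a x y, T (a *: x + y) = a *: T x + T y).
Hypotheses (T_bounded : exists M, forall x, ipnorm ip (T x) <= M * ipnorm ip x).
Hypothesis T_adj : is_adjoint ip T Ts.

Local Notation nsq x := (Re (ip x x)).
Local Notation opform := (fun y x => ip (T y) x).
Local Notation A := (re_part T Ts).
Local Notation B := (im_part T Ts).

Lemma ip_real x : ip x x = (nsq x)%:C.
Proof. by rewrite RRe_real ?ger0_real. Qed.

Lemma nsq_ge0 x : 0 <= nsq x.
Proof. by rewrite -ler0c -ip_real. Qed.

Lemma op_linear0 : T 0 = 0.
Proof. by apply: (addrI (T 0)); rewrite -{1}(scale1r (T 0)) -TL scaler0 !addr0. Qed.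

Lemma op_linearZ a x : T (a *: x) = a *: T x.
Proof. by rewrite -[a *: x]addr0 TL op_linear0 addr0. Qed.

Lemma opform_linear_left : linear_left opform.
Proof. by move=> a x y z; rewrite TL. Qed.

Lemma opform_conj_linear_right : conj_linear_right opform.
Proof. by move=> a x y z; rewrite (hermitian_conj_linear_right ipL ipC). Qed.

Lemma ip_re_part y x : ip (A y) x = form_re opform y x.
Proof. by rewrite /re_part (formZl ipL) (formDl ipL) [ip (Ts y) x]ipC -T_adj. Qed.

Lemma ip_im_part y x : ip (B y) x = form_im opform y x.
Proof. by rewrite /im_part (formZl ipL) (formBl ipL) [ip (Ts y) x]ipC -T_adj. Qed.

Lemma normc_ip_le_sum x y : normc (ip y x) <= (nsq x + nsq y) / 2.
Proof.
rewrite -[_ / 2]mul1r mulrA; apply: (hermitian_form_bound ipL ipC ipL ipC) => z.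
by rewrite ip_real normcR mul1r ger0_norm ?nsq_ge0.
Qed.

Lemma numrange_bounded : exists W, forall x, nsq x = 1 -> normc (ip (T x) x) <= W.
Proof.
have [M TM] := T_bounded; exists ((M ^+ 2 + 1) / 2) => x x1.
have := TM x; rewrite (proj2 (ipnorm_eq1 ip x) x1) mulr1 => Tx.
have nTx : nsq (T x) = ipnorm ip (T x) ^+ 2 by rewrite sqr_sqrtr ?nsq_ge0.
have := sqrtr_ge0 (nsq (T x)); rewrite -/(ipnorm ip (T x)).
have := normc_ip_le_sum x (T x); rewrite nTx x1; nra.
Qed.

Lemma normc_ip_le_numrad z : normc (ip (T z) z) <= numrad ip T * nsq z.
Proof.
have [z0|z0] := eqVneq (nsq z) 0.
  rewrite z0 mulr0; have -> : z = 0 by apply: ip_def; rewrite ip_real z0.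
  by rewrite op_linear0 (form0l ipL) normc0.
have zpos : 0 < nsq z by rewrite lt_neqAle eq_sym z0 nsq_ge0.
set s := Num.sqrt (nsq z); have spos : 0 < s by rewrite sqrtr_gt0.
have s2 : s ^+ 2 = nsq z by rewrite sqr_sqrtr ?nsq_ge0.
have [W TW] := numrange_bounded.
have x1 : nsq (s^-1%:C *: z) = 1.
  by rewrite (formZ_real ipL ipC) ip_real -rmorphM /= exprVn s2 mulVf ?gt_eqF.
have := le_numrad TW x1; rewrite op_linearZ (formZ_real ipL ipC) normcM normcR.
by rewrite ger0_norm ?sqr_ge0 // exprVn s2 ler_pdivrMl // mulrC.
Qed.

Lemma cartesian_form_bound h :
  linear_left h -> hermitian_form h -> (forall z, normc (h z z) <= normc (ip (T z) z)) ->
  forall x y, normc (h y x) <= numrad ip T * (nsq x + nsq y) / 2.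
Proof.
move=> hL hC hT; apply: (hermitian_form_bound ipL ipC hL hC) => z.
exact: le_trans (hT z) (normc_ip_le_numrad z).
Qed.

Lemma normc_ip_re_part x y : normc (ip (A y) x) <= numrad ip T * (nsq x + nsq y) / 2.
Proof.
rewrite ip_re_part; apply: cartesian_form_bound => [||z].
- exact: form_re_linear_left opform_linear_left opform_conj_linear_right.
- exact: form_re_hermitian.
by rewrite form_re_diag normcR normc_Re.
Qed.

Lemma normc_ip_im_part x y : normc (ip (B y) x) <= numrad ip T * (nsq x + nsq y) / 2.
Proof.
rewrite ip_im_part; apply: cartesian_form_bound => [||z].
- exact: form_im_linear_left opform_linear_left opform_conj_linear_right.
- exact: form_im_hermitian.
by rewrite form_im_diag normcR normc_Im.
Qed.

Variable theta : R.
Local Notation e := (expi theta).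
Local Notation M := (opmx2 (fun _ => 0) A (fun x => e *: B x) (fun _ => 0)).

Lemma ip_sum_M y : ip_sum ip (M y) y = ip (A y.2) y.1 + e * ip (B y.1) y.2.
Proof. by rewrite ip_sum_offdiag (formZl ipL e). Qed.

Lemma normc_ip_sum_M_le y :
  Re (ip_sum ip y y) = 1 -> normc (ip_sum ip (M y) y) <= numrad ip T.
Proof.
rewrite ip_sum_M /ip_sum (raddfD Re) => y1.
apply: le_trans (le_normcD _ _) _.
rewrite normcM normc_expi mul1r.
have := normc_ip_re_part y.1 y.2; have := normc_ip_im_part y.2 y.1.
by rewrite [nsq y.2 + _]addrC y1 mulr1; lra.
Qed.

Lemma numrad_M_le : numrad (ip_sum ip) M <= numrad ip T.
Proof. exact: numrad_le (numrad_ge0 _ _) normc_ip_sum_M_le. Qed.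

Lemma ip_sum_M_collinear a b x :
  ip_sum ip (M (a *: x, b *: x)) (a *: x, b *: x)
  = b * a^*%C * (Re (ip (T x) x))%:C + e * (a * b^*%C * (Im (ip (T x) x))%:C).
Proof.
have reL := form_re_linear_left opform_linear_left opform_conj_linear_right.
have imL := form_im_linear_left opform_linear_left opform_conj_linear_right.
rewrite ip_sum_M /= ip_re_part ip_im_part.
rewrite (formZl reL) (formZr reL (form_re_hermitian _)) form_re_diag.
by rewrite (formZl imL) (formZr imL (form_im_hermitian _)) form_im_diag !mulrA.
Qed.

(* With c ^+ 2 = 'i * e, the two off-diagonal terms of <M y, y> combine into
   c <T x, x>^* / 2. *)
Lemma numrad_M_witness x : nsq x = 1 ->
  exists2 y, Re (ip_sum ip y y) = 1 & normc (ip_sum ip (M y) y) = normc (ip (T x) x) / 2.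
Proof.
move=> x1; set c := sqrtc ('i * e); set s := Num.sqrt (2^-1 : R).
have c1 : normc c = 1.
  apply: normc_sqrtc_unit; rewrite normcM normc_expi mulr1 /=.
  by rewrite expr0n expr1n add0r sqrtr1.
have cJ : c * c^*%C = 1 by rewrite mulcJ_normc c1 expr1n.
have eJ : e * c^*%C = - 'i * c.
  have -> : e = - 'i * c ^+ 2 by rewrite sqr_sqrtc mulrA mulNr -expr2 sqr_i opprK mul1r.
  by rewrite expr2 -!mulrA cJ mulr1.
have s2 : s ^+ 2 = 2^-1 by rewrite sqr_sqrtr // invr_ge0 ler0n.
clearbody c s.
exists (s%:C *: x, (s%:C * c) *: x).
  rewrite /ip_sum (raddfD Re) /= -scalerA !(formZ_real ipL ipC).
  by rewrite (form_unimodular ipL ipC _ cJ) ip_real x1 -!rmorphM /= s2; lra.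
rewrite ip_sum_M_collinear.
transitivity (normc ((s ^+ 2)%:C * (c * (Re (ip (T x) x))%:C
                                    + e * c^*%C * (Im (ip (T x) x))%:C))).
  by rewrite conjcM !conjc_real rmorphXn; congr normc; ring.
rewrite eJ (_ : _ + _ = c * (ip (T x) x)^*%C); last by rewrite conjcE; ring.
by rewrite !normcM normcR ger0_norm ?sqr_ge0 // s2 c1 normc_conj mul1r mulrC.
Qed.

Lemma numrad_le_2M : numrad ip T <= 2 * numrad (ip_sum ip) M.
Proof.
apply: numrad_le => [|x x1]; first by rewrite mulr_ge0 ?numrad_ge0.
have [y y1 My] := numrad_M_witness x1.
by have := le_numrad normc_ip_sum_M_le y1; rewrite My; lra.
Qed.

End CartesianDecomposition.

Theorem corollary4p9 (R : realType) (V : lmodType R[i]) (ip : V -> V -> R[i])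
    (T Ts : V -> V) (theta : R) :
  is_hilbert ip -> is_bounded_op ip T -> is_adjoint ip T Ts ->
  let A := re_part T Ts in
  let B := im_part T Ts in
  let M := opmx2 (fun _ => 0) A (fun x => expi theta *: B x) (fun _ => 0) in
  2%:R^-1 * numrad ip T <= numrad (ip_sum ip) M /\
  numrad (ip_sum ip) M <= numrad ip T.
Proof.
move=> [ipL ipC ip_ge0 ip_def _] [TL T_bounded] T_adj A B M.
have ge := numrad_le_2M ipL ipC ip_ge0 ip_def TL T_bounded T_adj theta.
have le := numrad_M_le ipL ipC ip_ge0 ip_def TL T_bounded T_adj theta.
by split; lra.
Qed.
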